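(* Let $\theta\in(0,\pi)$ and let $\mathcal{B}_\theta$ be the moduli space of spherical bigons of angle $\theta$ with labeled sides. For $i=1,2$ let $r_i$ be the radius of the disk $D_i\subset\mathbb{S}^2$ whose boundary contains side $i$, $k_i=\cot r_i$ the geodesic curvature of side $i$, $K_i=\log k_i$, $\ell_i$ the length of side $i$, and $T_i=\ell_ik_i$ its total geodesic curvature. Then the $1$-form $\omega_\theta:=\ell_1\,\mathrm{d}k_1+\ell_2\,\mathrm{d}k_2=T_1\,\mathrm{d}K_1+T_2\,\mathrm{d}K_2$ on $\mathcal{B}_\theta$ is closed.
   Context: A spherical bigon is the intersection $D_1\cap D_2$ of two open round disks in $\mathbb{S}^2$ of radii less than $\frac{\pi}{2}$, neither containing the other, with angle the interior angle at its corners; $\mathcal{B}_\theta$ consists of such bigons of angle $\theta$ with the two sides labeled $1,2$, up to label-preserving isometry. The map $(r_1,r_2)$ is a bijection $\mathcal{B}_\theta\to(0,\frac{\pi}{2})^2$, so $(k_1,k_2)$ and $(K_1,K_2)$ give smooth parametrizations of $\mathcal{B}_\theta$ by $\mathbb{R}_+^2$ and $\mathbb{R}^2$ respectively. *)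

From Stdlib Require Import Reals.
From Coquelicot Require Import Coquelicot.
Open Scope R_scope.

(* A spherical bigon of angle th in B_th is determined by the radii
   (r1, r2) in (0, pi/2)^2 of the disks D1, D2.  Spherical trigonometry
   in the triangle (c1, c2, p), c_i = centre of D_i, p = a corner:
   sides c1p = r1, c2p = r2, and the angle at p between the radii is
   pi - th (the interior angle of the bigon is th). *)

Definition center_dist (th r1 r2 : R) : R :=
  acos (cos r1 * cos r2 - sin r1 * sin r2 * cos th).

(* angle at the centre c_i (of the disk of radius ri) between c_i->c_j and
   c_i->p; side i is the arc of the circle of radius ri inside D_j, which
   subtends the angle 2 * center_angle at c_i. *)
Definition center_angle (th ri rj : R) : R :=
  let d := center_dist th ri rj in
  acos ((cos rj - cos ri * cos d) / (sin ri * sin d)).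

(* length of side i: arc of a circle of spherical radius ri and central
   angle 2 * alpha_i has length 2 * alpha_i * sin ri *)
Definition side_length (th ri rj : R) : R :=
  2 * center_angle th ri rj * sin ri.

Definition radius_of_curv (k : R) : R := atan (/ k).

Definition ell1 (th k1 k2 : R) : R :=
  side_length th (radius_of_curv k1) (radius_of_curv k2).
Definition ell2 (th k1 k2 : R) : R :=
  side_length th (radius_of_curv k2) (radius_of_curv k1).

From Stdlib Require Import Reals Lra.
From Coquelicot Require Import Coquelicot.
Open Scope R_scope.

(* In the curvature coordinates, with c = cos th and s = sin th, the half
   central angle alpha_i of side i satisfies
     cot alpha_i = (k_j + c k_i) / (s sqrt (1 + k_i^2)),
   and l_i = 2 alpha_i / sqrt (1 + k_i^2).  Differentiating in k_j gives
     d l_i / d k_j = -2 s / (k_1^2 + k_2^2 + 2 c k_1 k_2 + s^2),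
   which is symmetric in (k_1, k_2); this is exactly the closedness of omega_th. *)

Lemma sqrt_one_plus_sq_pos (k : R) : 0 < sqrt (1 + k ^ 2).
Proof. apply sqrt_lt_R0; nra. Qed.

Lemma sqrt_one_plus_sq_sqr (k : R) : sqrt (1 + k ^ 2) * sqrt (1 + k ^ 2) = 1 + k ^ 2.
Proof. apply sqrt_sqrt; nra. Qed.

Lemma sqrt_one_plus_inv_sq (k : R) : 0 < k -> sqrt (1 + (/ k)²) = sqrt (1 + k ^ 2) / k.
Proof.
  intros Hk.
  pose proof (sqrt_one_plus_sq_pos k).
  apply sqrt_lem_1.
  - apply Rplus_le_le_0_compat; [lra | apply Rle_0_sqr].
  - apply Rlt_le, Rdiv_lt_0_compat; lra.
  - replace (sqrt (1 + k ^ 2) / k * (sqrt (1 + k ^ 2) / k))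
      with ((sqrt (1 + k ^ 2) * sqrt (1 + k ^ 2)) / (k * k)) by (field; lra).
    rewrite sqrt_one_plus_sq_sqr; unfold Rsqr; field; lra.
Qed.

Lemma cos_radius_of_curv (k : R) :
  0 < k -> cos (radius_of_curv k) = k / sqrt (1 + k ^ 2).
Proof.
  intros Hk; unfold radius_of_curv.
  pose proof (sqrt_one_plus_sq_pos k).
  rewrite cos_atan, sqrt_one_plus_inv_sq by lra.
  field; lra.
Qed.

Lemma sin_radius_of_curv (k : R) :
  0 < k -> sin (radius_of_curv k) = 1 / sqrt (1 + k ^ 2).
Proof.
  intros Hk; unfold radius_of_curv.
  pose proof (sqrt_one_plus_sq_pos k).
  rewrite sin_atan, sqrt_one_plus_inv_sq by lra.
  field; lra.
Qed.

Lemma acos_div_sqrt (p m : R) :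
  0 < m -> acos (p / sqrt (p ^ 2 + m ^ 2)) = PI / 2 - atan (p / m).
Proof.
  intros Hm.
  set (S := sqrt (p ^ 2 + m ^ 2)).
  assert (HS : 0 < S) by (apply sqrt_lt_R0; nra).
  assert (ES : S * S = p ^ 2 + m ^ 2) by (apply sqrt_sqrt; nra).
  assert (Ex : 1 - (p / S)² = (m / S) * (m / S)).
  { unfold Rsqr.
    replace (p / S * (p / S)) with (p ^ 2 / (S * S)) by (field; lra).
    replace (m / S * (m / S)) with (m ^ 2 / (S * S)) by (field; lra).
    rewrite ES; field; nra. }
  assert (Hx : -1 < p / S < 1).
  { assert (Hpos : 0 < 1 - (p / S)²)
      by (rewrite Ex; apply Rmult_lt_0_compat; apply Rdiv_lt_0_compat; lra).
    unfold Rsqr in Hpos; nra. }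
  rewrite acos_asin, asin_atan by lra.
  rewrite Ex, sqrt_square by (apply Rlt_le, Rdiv_lt_0_compat; lra).
  do 2 f_equal; field; lra.
Qed.

(* [bigon_disc th k1 k2 = sin^2 d / (sin^2 r1 sin^2 r2)], d the distance between the centres. *)
Definition bigon_disc (th k1 k2 : R) : R :=
  k1 ^ 2 + k2 ^ 2 + 2 * cos th * k1 * k2 + sin th ^ 2.

Lemma bigon_disc_sym (th k1 k2 : R) : bigon_disc th k1 k2 = bigon_disc th k2 k1.
Proof. unfold bigon_disc; ring. Qed.

Lemma bigon_disc_split (th ki kj : R) :
  bigon_disc th ki kj = (kj + cos th * ki) ^ 2 + (sin th * sqrt (1 + ki ^ 2)) ^ 2.
Proof.
  replace ((sin th * sqrt (1 + ki ^ 2)) ^ 2)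
    with (sin th ^ 2 * (sqrt (1 + ki ^ 2) * sqrt (1 + ki ^ 2))) by ring.
  rewrite sqrt_one_plus_sq_sqr.
  pose proof (sin2_cos2 th) as Hpyth; unfold Rsqr in Hpyth.
  unfold bigon_disc; nra.
Qed.

Lemma bigon_disc_gram (th ki kj : R) :
  (1 + ki ^ 2) * (1 + kj ^ 2) - (ki * kj - cos th) ^ 2 = bigon_disc th ki kj.
Proof.
  pose proof (sin2_cos2 th) as Hpyth; unfold Rsqr in Hpyth.
  unfold bigon_disc; nra.
Qed.

Lemma bigon_disc_pos (th ki kj : R) : 0 < th < PI -> 0 < bigon_disc th ki kj.
Proof.
  intros Hth.
  pose proof (sin_gt_0 th (proj1 Hth) (proj2 Hth)) as Hs.
  pose proof (sqrt_one_plus_sq_pos ki).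
  rewrite bigon_disc_split.
  apply Rplus_le_lt_0_compat; [apply pow2_ge_0 | apply pow_lt, Rmult_lt_0_compat; lra].
Qed.

Section CurvatureCoordinates.

Variables (th ki kj : R).
Hypotheses (Hth : 0 < th < PI) (Hki : 0 < ki) (Hkj : 0 < kj).

Local Notation Si := (sqrt (1 + ki ^ 2)).
Local Notation Sj := (sqrt (1 + kj ^ 2)).
Local Notation Q := (bigon_disc th ki kj).

Lemma one_minus_sq_cos_center_dist :
  1 - ((ki * kj - cos th) / (Si * Sj))² = (sqrt Q / (Si * Sj))².
Proof.
  pose proof (sqrt_one_plus_sq_pos ki); pose proof (sqrt_one_plus_sq_pos kj).
  assert (EQ : sqrt Q * sqrt Q = Q)
    by (apply sqrt_sqrt, Rlt_le, bigon_disc_pos, Hth).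
  unfold Rsqr.
  replace ((ki * kj - cos th) / (Si * Sj) * ((ki * kj - cos th) / (Si * Sj)))
    with ((ki * kj - cos th) ^ 2 / ((Si * Si) * (Sj * Sj))) by (field; lra).
  replace (sqrt Q / (Si * Sj) * (sqrt Q / (Si * Sj)))
    with ((sqrt Q * sqrt Q) / ((Si * Si) * (Sj * Sj))) by (field; lra).
  rewrite EQ, !sqrt_one_plus_sq_sqr, <- bigon_disc_gram.
  field; nra.
Qed.

Lemma center_dist_acos_arg_range :
  -1 <= (ki * kj - cos th) / (Si * Sj) <= 1.
Proof.
  pose proof one_minus_sq_cos_center_dist as Ec.
  pose proof (Rle_0_sqr (sqrt Q / (Si * Sj))).
  unfold Rsqr in *; nra.
Qed.

Lemma center_dist_acos_arg :
  cos (radius_of_curv ki) * cos (radius_of_curv kj)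
    - sin (radius_of_curv ki) * sin (radius_of_curv kj) * cos th
  = (ki * kj - cos th) / (Si * Sj).
Proof.
  pose proof (sqrt_one_plus_sq_pos ki); pose proof (sqrt_one_plus_sq_pos kj).
  rewrite !cos_radius_of_curv, !sin_radius_of_curv by assumption.
  field; lra.
Qed.

Lemma cos_center_dist_curv :
  cos (center_dist th (radius_of_curv ki) (radius_of_curv kj))
  = (ki * kj - cos th) / (Si * Sj).
Proof.
  unfold center_dist; rewrite center_dist_acos_arg.
  exact (cos_acos _ center_dist_acos_arg_range).
Qed.

Lemma sin_center_dist_curv :
  sin (center_dist th (radius_of_curv ki) (radius_of_curv kj))
  = sqrt Q / (Si * Sj).
Proof.
  pose proof (sqrt_one_plus_sq_pos ki); pose proof (sqrt_one_plus_sq_pos kj).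
  unfold center_dist; rewrite center_dist_acos_arg.
  rewrite sin_acos, one_minus_sq_cos_center_dist by exact center_dist_acos_arg_range.
  apply sqrt_Rsqr, Rlt_le, Rdiv_lt_0_compat; [apply sqrt_lt_R0, bigon_disc_pos, Hth | nra].
Qed.

Lemma center_angle_curv :
  center_angle th (radius_of_curv ki) (radius_of_curv kj)
  = PI / 2 - atan ((kj + cos th * ki) / (sin th * Si)).
Proof.
  pose proof (sqrt_one_plus_sq_pos ki); pose proof (sqrt_one_plus_sq_pos kj).
  pose proof (sin_gt_0 th (proj1 Hth) (proj2 Hth)).
  assert (HQ : 0 < sqrt Q) by (apply sqrt_lt_R0, bigon_disc_pos, Hth).
  assert (Hnum : kj + cos th * ki = kj * (Si * Si) - ki * (ki * kj - cos th))
    by (rewrite sqrt_one_plus_sq_sqr; ring).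
  unfold center_angle; cbv zeta.
  rewrite cos_center_dist_curv, sin_center_dist_curv,
    !cos_radius_of_curv, sin_radius_of_curv by assumption.
  replace ((kj / Sj - ki / Si * ((ki * kj - cos th) / (Si * Sj)))
           / (1 / Si * (sqrt Q / (Si * Sj)))) with ((kj + cos th * ki) / sqrt Q)
    by (rewrite Hnum; field; repeat split; lra).
  rewrite bigon_disc_split.
  apply acos_div_sqrt, Rmult_lt_0_compat; assumption.
Qed.

Lemma side_length_curv :
  side_length th (radius_of_curv ki) (radius_of_curv kj)
  = (PI - 2 * atan ((kj + cos th * ki) / (sin th * Si))) / Si.
Proof.
  pose proof (sqrt_one_plus_sq_pos ki).
  unfold side_length; rewrite center_angle_curv, sin_radius_of_curv by assumption.
  field; lra.
Qed.

End CurvatureCoordinates.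

Lemma is_derive_side_length_closed_form (th a y : R) : 0 < th < PI ->
  is_derive
    (fun k => (PI - 2 * atan ((k + cos th * a) / (sin th * sqrt (1 + a ^ 2))))
              / sqrt (1 + a ^ 2))
    y (-2 * sin th / bigon_disc th a y).
Proof.
  intros Hth.
  pose proof (sqrt_one_plus_sq_pos a).
  pose proof (sin_gt_0 th (proj1 Hth) (proj2 Hth)).
  pose proof (bigon_disc_pos th a y Hth) as HQ.
  rewrite bigon_disc_split in HQ |- *.
  set (S := sqrt (1 + a ^ 2)) in *.
  auto_derive; [exact I |].
  field; repeat split; lra.
Qed.

Lemma is_derive_side_length_curv (th ki kj : R) :
  0 < th < PI -> 0 < ki -> 0 < kj ->
  is_derive (fun k => side_length th (radius_of_curv ki) (radius_of_curv k))
    kj (-2 * sin th / bigon_disc th ki kj).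
Proof.
  intros Hth Hki Hkj.
  eapply is_derive_ext_loc; [| exact (is_derive_side_length_closed_form th ki kj Hth)].
  apply (filter_imp (fun k => 0 < k)); [| exact (open_gt 0 kj Hkj)].
  intros k Hk; symmetry; exact (side_length_curv th ki k Hth Hki Hk).
Qed.

Theorem lemma3p2 (th : R) (Hth : 0 < th < PI) (k1 k2 : R)
  (Hk1 : 0 < k1) (Hk2 : 0 < k2) :
  exists a : R,
    is_derive (fun y => ell1 th k1 y) k2 a /\
    is_derive (fun x => ell2 th x k2) k1 a.
Proof.
  exists (-2 * sin th / bigon_disc th k1 k2); split.
  - exact (is_derive_side_length_curv th k1 k2 Hth Hk1 Hk2).
  - rewrite bigon_disc_sym.
    exact (is_derive_side_length_curv th k2 k1 Hth Hk2 Hk1).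
Qed.
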